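(* For all integers $k\ge1$ and generic $a,b,c$, the polynomials $Q_k^{(2)}(n;a;b,c)=\sum_{j=0}^k\frac{(-n)_j(n+a)_j(-k)_j}{j!(b)_j(c)_j}$ satisfy $$abc\,\frac{n+\frac a2}{\frac a2}\,Q_k^{(2)}(n;a;b,c)=(n+a)(n+b)(n+c)\,Q_{k-1}^{(2)}(n;a+1;b+1,c+1)+n(n+a-b)(n+a-c)\,Q_{k-1}^{(2)}(n-1;a+1;b+1,c+1).$$
   Context: $(c)_n$ denotes the Pochhammer symbol, $(c)_0=1$. *)

From HB Require Import structures.
From mathcomp Require Import all_boot all_order all_algebra.
Set Implicit Arguments. Unset Strict Implicit. Unset Printing Implicit Defensive.
Import Order.TTheory GRing.Theory Num.Theory.
Local Open Scope ring_scope.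

Definition poch (R : ringType) (x : R) (j : nat) : R :=
  \prod_(i < j) (x + i%:R).

Definition Q2 (R : fieldType) (k : nat) (n a b c : R) : R :=
  \sum_(j < k.+1)
    (poch (- n) j * poch (n + a) j * poch (- (k%:R)) j)
      / ((j`!)%:R * poch b j * poch c j).

From HB Require Import structures.
From mathcomp Require Import all_boot all_order all_algebra.
From mathcomp Require Import ring.
Set Implicit Arguments. Unset Strict Implicit. Unset Printing Implicit Defensive.
Import Order.TTheory GRing.Theory Num.Theory.
Local Open Scope ring_scope.

(* Write T_j for the j-th term of Q_k(n;a;b,c).  The j-th terms of the two
   shifted polynomials on the right are T_j times rational factors (shifting a
   Pochhammer argument by one multiplies it by (x+j)/x), and after multiplying
   by the cubic coefficients their sum is
   b c (2n+a) (T_j + ((j+1) T_{j+1} - j T_j) / k).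
   Summing over j < k telescopes to b c (2n+a) Q_k, and
   a b c (n + a/2)/(a/2) = b c (2n+a). *)

Lemma poch0 (R : nzRingType) (x : R) : poch x 0 = 1.
Proof. by rewrite /poch big_ord0. Qed.

Lemma pochS (R : nzRingType) (x : R) j : poch x j.+1 = poch x j * (x + j%:R).
Proof. by rewrite /poch big_ord_recr. Qed.

Lemma poch_add1M (R : comNzRingType) (x : R) j :
  poch (x + 1) j * x = poch x j * (x + j%:R).
Proof.
elim: j => [|j IH]; first by rewrite !poch0 addr0 mul1r.
rewrite !pochS -natr1.
transitivity (poch (x + 1) j * x * (x + 1 + j%:R)); first by ring.
by rewrite IH; ring.
Qed.

Lemma poch_neq0 (R : fieldType) (x : R) j :
  (forall i, (i < j)%N -> x + i%:R != 0) -> poch x j != 0.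
Proof. by move=> xi_neq0; apply/prodf_neq0 => i _; apply: xi_neq0. Qed.

Lemma sum_telescope_add (R : fieldType) (T : nat -> R) (K : nat) :
  (K.+1)%:R != 0 :> R ->
  \sum_(j < K.+1) (T j + ((j.+1)%:R * T j.+1 - j%:R * T j) / (K.+1)%:R) =
  \sum_(j < K.+2) T j.
Proof.
move=> K1_neq0; rewrite big_split /= -big_distrl /= [in RHS]big_ord_recr /=.
rewrite -(big_mkord xpredT (fun j => (j.+1)%:R * T j.+1 - j%:R * T j)).
by rewrite telescope_sumr // mul0r subr0 mulrAC divff // mul1r.
Qed.

Definition Q2_term (R : fieldType) (k : nat) (n a b c : R) (j : nat) : R :=
  poch (- n) j * poch (n + a) j * poch (- (k%:R)) j
    / ((j`!)%:R * poch b j * poch c j).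

Lemma Q2E (R : fieldType) (k : nat) (n a b c : R) :
  Q2 k n a b c = \sum_(j < k.+1) Q2_term k n a b c j.
Proof. by []. Qed.

Lemma Q2_term_contiguous (R : fieldType) (hchar : [pchar R] =i pred0)
  (K j : nat) (n a b c : R)
  (hb : forall i, (i <= j)%N -> b + i%:R != 0)
  (hc : forall i, (i <= j)%N -> c + i%:R != 0) :
  let T := Q2_term K.+1 n a b c in
  (n + a) * (n + b) * (n + c) * Q2_term K n (a + 1) (b + 1) (c + 1) j
  + n * (n + a - b) * (n + a - c) * Q2_term K (n - 1) (a + 1) (b + 1) (c + 1) j
  = b * c * (2 * n + a) * (T j + ((j.+1)%:R * T j.+1 - j%:R * T j) / (K.+1)%:R).
Proof.
move=> T; rewrite /T /Q2_term.
have natS_neq0 m : (m.+1%:R : R) != 0 by rewrite (proj1 (pcharf0P R) hchar).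
have fact_neq0 : (j`!)%:R != 0 :> R by rewrite (proj1 (pcharf0P R) hchar) -lt0n fact_gt0.
have b_neq0 : b != 0 by have := hb 0%N isT; rewrite addr0.
have c_neq0 : c != 0 by have := hc 0%N isT; rewrite addr0.
have Bj_neq0 : poch b j != 0 by apply: poch_neq0 => i /ltnW; apply: hb.
have Cj_neq0 : poch c j != 0 by apply: poch_neq0 => i /ltnW; apply: hc.
have [bj_neq0 cj_neq0] := (hb j (leqnn j), hc j (leqnn j)).
rewrite !pochS factS natrM.
rewrite (_ : n - 1 + (a + 1) = n + a); last by ring.
rewrite (_ : - (n - 1) = - n + 1); last by ring.
rewrite (_ : n + (a + 1) = n + a + 1); last by ring.
rewrite (_ : - K%:R = - (K.+1)%:R + 1); last by rewrite -natr1; ring.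
have eN := poch_add1M (- n) j.
have eA := poch_add1M (n + a) j.
have eK := poch_add1M (- (K.+1)%:R : R) j.
have eB := poch_add1M b j.
have eC := poch_add1M c j.
have -> : poch (b + 1) j = poch b j * (b + j%:R) / b by rewrite -eB mulfK.
have -> : poch (c + 1) j = poch c j * (c + j%:R) / c by rewrite -eC mulfK.
have -> : poch (- (K.+1)%:R + 1 : R) j =
          poch (- (K.+1)%:R) j * (- (K.+1)%:R + j%:R) / - (K.+1)%:R.
  by rewrite -eK mulfK // oppr_eq0.
move: eN eA; set X := poch (- n) j; set Y := poch (n + a) j.
set X' := poch (- n + 1) j; set Y' := poch (n + a + 1) j => eN eA.
(* n and n + a may vanish, so (n+a+1)_j and (-n+1)_j cannot be divided out;
   instead the cubic coefficients supply the factors n + a and -n of eA, eN. *)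
rewrite (_ : forall P Q : R,
    (n + a) * (n + b) * (n + c) * (X * Y' * P * Q)
    + n * (n + a - b) * (n + a - c) * (X' * Y * P * Q)
  = (n + b) * (n + c) * (X * (Y' * (n + a)) * P * Q)
    - (n + a - b) * (n + a - c) * (X' * - n * Y * P * Q)); last by move=> P Q; ring.
rewrite eA eN; field.
by rewrite Cj_neq0 Bj_neq0 fact_neq0 cj_neq0 bj_neq0 b_neq0 c_neq0 oppr_eq0
  !(addrC 1) !natr1 !natS_neq0.
Qed.

Theorem mainTheorem14 (R : fieldType) (hchar : [pchar R] =i pred0)
  (k : nat) (hk : (1 <= k)%N) (n a b c : R)
  (ha : a != 0)
  (hb : forall j : nat, (j < k)%N -> b + j%:R != 0)
  (hc : forall j : nat, (j < k)%N -> c + j%:R != 0) :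
  a * b * c * ((n + a / 2) / (a / 2)) * Q2 k n a b c =
    (n + a) * (n + b) * (n + c) * Q2 k.-1 n (a + 1) (b + 1) (c + 1)
  + n * (n + a - b) * (n + a - c) * Q2 k.-1 (n - 1) (a + 1) (b + 1) (c + 1).
Proof.
case: k hk hb hc => // K _ hb hc /=.
have natS_neq0 m : (m.+1%:R : R) != 0 by rewrite (proj1 (pcharf0P R) hchar).
rewrite !Q2E ![in RHS]big_distrr -big_split /=.
rewrite (eq_bigr (fun j : 'I_K.+1 => b * c * (2 * n + a) *
    (Q2_term K.+1 n a b c j + ((j.+1)%:R * Q2_term K.+1 n a b c j.+1
       - j%:R * Q2_term K.+1 n a b c j) / (K.+1)%:R))); last first.
  by move=> j _; apply: Q2_term_contiguous => // i ij;
    [apply: hb | apply: hc]; apply: leq_ltn_trans ij _.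
rewrite -big_distrr sum_telescope_add //=.
have two_neq0 : (2 : R) != 0 by apply: natS_neq0.
by field; rewrite ha two_neq0.
Qed.
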